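(* Let $f\colon\{0,1\}^n\to\{0,1\}^n$ and $F(x,i)=f(x)_{1,\ldots,i-1}$ on $\{0,1\}^n\times[n]$, and let $Z=(X,I)$ be uniform on $\{0,1\}^n\times[n]$. Let $A$ be an $F$-collision-finder, and for $(x,i)$ let $\varepsilon(x,i)$ be the statistical distance between the output distribution of $A(x,i;R)$ ($R$ uniform coins) and the uniform distribution on $F^{-1}(F(x,i))$. If $H(A(Z;R)\mid Z)\ge H(Z\mid F(Z))-\frac{1}{64n^2}$, then $\mathbb{E}_{i\leftarrow[n],x\leftarrow\{0,1\}^n}[\varepsilon(x,i)]\le\frac{1}{8n}$.
   Context: An $F$-collision-finder is a randomized algorithm $A$ with $A(z;r)\in F^{-1}(F(z))$ for every input $z$ in the domain of $F$ and coins $r$. Statistical distance between $P,Q$ is $\max_T|P(T)-Q(T)|$. $H(\cdot\mid\cdot)$ is conditional Shannon entropy. *)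

From Stdlib Require Import Reals.
From mathcomp Require Import all_boot all_order all_algebra.
From mathcomp Require Import Rstruct.
Set Implicit Arguments. Unset Strict Implicit. Unset Printing Implicit Defensive.
Import Order.TTheory GRing.Theory Num.Theory.
Local Open Scope ring_scope.

Definition log2 (x : R) : R := (ln x / ln 2)%R.

(* Conditional Shannon entropy H(Y | X) of two random variables X, Y
   defined on a finite sample space Omega with the uniform distribution:
   H(Y|X) = - sum_{w} Pr[w] * log2 Pr[Y = Y w | X = X w]
          = - sum_{x,y} p(x,y) log2 (p(x,y)/p(x)). *)
Definition condEnt (Omega : finType) (TX TY : eqType)
    (X : Omega -> TX) (Y : Omega -> TY) : R :=
  \sum_(w : Omega)
     (#|Omega|%:R)^-1 *
     - log2 (#|[pred v | (X v == X w) && (Y v == Y w)]|%:R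
             / #|[pred v | X v == X w]|%:R).

Definition stat_dist (D : finType) (P Q : {set D} -> R) : R :=
  \big[Num.max/0]_(T : {set D}) `|P T - Q T|.

(* bit strings {0,1}^n and the domain {0,1}^n x [n];
   i : 'I_n with value k encodes the index k+1 in [n] = {1,...,n} *)
Definition bits (n : nat) := (n.-tuple bool)%type.
Definition dom (n : nat) := (bits n * 'I_n)%type.

Definition Fpre (n : nat) (f : bits n -> bits n) (z : dom n) : seq bool :=
  take (nat_of_ord z.2) (val (f z.1)).

Definition collision_finder (D : finType) (C : eqType) (F : D -> C)
    (Rc : finType) (A : D -> Rc -> D) : Prop :=
  forall z r, F (A z r) = F z.

Definition out_dist (D Rc : finType) (A : D -> Rc -> D) (z : D)
    (T : {set D}) : R :=
  #|[set r : Rc | A z r \in T]|%:R / #|Rc|%:R.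

Definition unif_preimage (D : finType) (C : eqType) (F : D -> C) (z : D)
    (T : {set D}) : R :=
  #|T :&: [set z' | F z' == F z]|%:R / #|[set z' | F z' == F z]|%:R.

From Stdlib Require Import Reals.
From mathcomp Require Import all_boot all_order all_algebra.
From mathcomp Require Import Rstruct ring lra.
Set Implicit Arguments.
Unset Strict Implicit.
Unset Printing Implicit Defensive.
Import Order.TTheory GRing.Theory Num.Theory.
Local Open Scope ring_scope.

(* Let p_z be the output distribution of A(z; .) and u_z the uniform
   distribution on the fibre F^-1(F z).  Since A is a collision finder, p_z is
   supported in that fibre, so H(Z | F(Z)) - H(A(Z;R) | Z) is exactly the mean
   over z of KL(p_z || u_z), measured in bits.  For each z the Hellinger
   quantity 2 - 2 sum_y sqrt(p_z y u_z y) lies between SD(p_z, u_z)^2 (by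
   Cauchy-Schwarz, after factoring p - u = (sqrt p - sqrt u)(sqrt p + sqrt u))
   and KL(p_z || u_z) in nats (by ln x >= 1 - 1/x applied to sqrt(p/u)).  Hence
   the mean of SD^2 is at most ln 2 / (64 n^2) <= (1/(8n))^2, and Cauchy-Schwarz
   once more bounds the mean of SD by 1/(8n). *)

(* The argument of [ln] is parsed in [R_scope]: there [*] and [/] are [Rmult]
   and [Rdiv], not the ring operations (this also applies inside [kl_div]). *)
Lemma lnM (x y : R) : 0 < x -> 0 < y -> ln (x * y) = ln x + ln y.
Proof. by move=> /RltP x_gt0 /RltP y_gt0; rewrite ln_mult. Qed.

Lemma lnV (x : R) : 0 < x -> ln x^-1 = - ln x.
Proof. by move=> /RltP x_gt0; rewrite -RinvE ln_Rinv. Qed.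

Lemma lnX (x : R) (k : nat) : 0 < x -> ln (x ^+ k) = k%:R * ln x.
Proof. by move=> /RltP x_gt0; rewrite -RpowE ln_pow // INRE. Qed.

Lemma ln_le_subr1 (x : R) : 0 < x -> ln x <= x - 1.
Proof.
move=> /RltP x_gt0; have /RleP := exp_ineq1_le (ln x).
by rewrite exp_ln // !RealsE => ?; lra.
Qed.

Lemma ln_ge_1_sub_inv (x : R) : 0 < x -> 1 - x^-1 <= ln x.
Proof.
move=> x_gt0; have := ln_le_subr1 (x := x^-1); rewrite invr_gt0 => /(_ x_gt0).
by rewrite lnV //; lra.
Qed.

Lemma ln2_gt0 : 0 < ln 2.
Proof.
apply/RltP/(Rlt_trans _ _ _ _ ln_lt_2)/Rinv_0_lt_compat/Rlt_0_2.
Qed.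

Lemma ln2_le1 : ln 2 <= 1.
Proof.
by have := ln_le_subr1 (x := 2); rewrite !RealsE /= ltr0n => /(_ isT); lra.
Qed.

Lemma mul_ln2_log2 (x : R) : ln 2 * log2 x = ln x.
Proof. by rewrite /log2 mulrC divfK // gt_eqF // ln2_gt0. Qed.

Lemma hellinger_term_le (a b : R) : 0 < a -> 0 < b ->
  2 * a ^+ 2 - 2 * (a * b) <= a ^+ 2 * ln (a ^+ 2 / b ^+ 2).
Proof.
move=> a_gt0 b_gt0; have ab_gt0 : 0 < a / b by rewrite divr_gt0.
rewrite RdivE -expr_div_n lnX //.
have := ln_ge_1_sub_inv ab_gt0; rewrite invf_div => ln_ge.
have -> : 2 * a ^+ 2 - 2 * (a * b) = a ^+ 2 * (2 * (1 - b / a)).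
  by field; rewrite gt_eqF.
by apply: ler_wpM2l; [exact: sqr_ge0 | lra].
Qed.

Lemma cauchy_schwarz (I : finType) (a b : I -> R) :
  (\sum_i a i * b i) ^+ 2 <= (\sum_i a i ^+ 2) * (\sum_i b i ^+ 2).
Proof.
set A := \sum_i a i ^+ 2; set B := \sum_i b i ^+ 2; set S := \sum_i a i * b i.
have A_ge0 : 0 <= A by apply: sumr_ge0 => i _; exact: sqr_ge0.
have quadratic_ge0 t : 0 <= t ^+ 2 * A - 2 * t * S + B.
  have -> : t ^+ 2 * A - 2 * t * S + B = \sum_i (t * a i - b i) ^+ 2.
    rewrite /A /B /S !mulr_sumr -sumrN -!big_split /=.
    by apply: eq_bigr => i _; ring.
  by apply: sumr_ge0 => i _; exact: sqr_ge0.
have [A0 | A_neq0] := eqVneq A 0.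
  have a0 i : a i = 0.
    apply/eqP; rewrite -sqrf_eq0 eq_le sqr_ge0 andbT -A0 /A (bigD1 i) //=.
    by rewrite lerDl; apply: sumr_ge0 => j _; exact: sqr_ge0.
  by rewrite A0 mul0r /S big1 ?expr0n // => i _; rewrite a0 mul0r.
have A_gt0 : 0 < A by rewrite lt_def A_neq0.
have := quadratic_ge0 (S / A).
have -> : (S / A) ^+ 2 * A - 2 * (S / A) * S + B = B - S ^+ 2 / A by field.
by rewrite subr_ge0 ler_pdivrMr // mulrC.
Qed.

Lemma sum_le_of_sum_sqr_le (I : finType) (a : I -> R) (e : R) :
  (forall i, 0 <= a i) -> 0 <= e ->
  \sum_i a i ^+ 2 <= #|I|%:R * e ^+ 2 -> \sum_i a i <= #|I|%:R * e.
Proof.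
move=> a_ge0 e_ge0 sum_sqr_le.
have card_ge0 : 0 <= #|I|%:R :> R by [].
rewrite -(ler_pXn2r (n := 2)) // ?nnegrE ?sumr_ge0 ?mulr_ge0 //.
have := cauchy_schwarz a (fun=> 1).
under eq_bigr do rewrite mulr1.
under [X in _ * X]eq_bigr do rewrite expr1n.
rewrite sumr_const => /le_trans; apply.
by rewrite mulrC exprMn expr2 -mulrA ler_wpM2l.
Qed.

Lemma norm_sum_le_half_sum_norm (I : finType) (d : I -> R) (P : pred I) :
  \sum_i d i = 0 -> 2 * `|\sum_(i | P i) d i| <= \sum_i `|d i|.
Proof.
move=> /eqP; rewrite (bigID P) /= addr_eq0 => /eqP sumP.
rewrite [X in _ <= X](bigID P) /= mulr_natl mulr2n.
by apply: lerD; [|rewrite sumP normrN]; exact: ler_norm_sum.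
Qed.

Lemma stat_dist_ge0 (D : finType) (P Q : {set D} -> R) : 0 <= stat_dist P Q.
Proof.
by apply: (big_ind (fun x => 0 <= x)) => // x y x_ge0 y_ge0; rewrite le_max x_ge0.
Qed.

Lemma stat_dist_sqr_le (D : finType) (P Q : {set D} -> R) (K : R) :
  (forall T, (P T - Q T) ^+ 2 <= K) -> stat_dist P Q ^+ 2 <= K.
Proof.
move=> PQ_le; suff [] : 0 <= stat_dist P Q /\ stat_dist P Q ^+ 2 <= K by [].
apply: (big_ind (fun x => 0 <= x /\ x ^+ 2 <= K)) => [|x y [? ?] [? ?]|T _].
- by rewrite expr0n; split=> //; exact: le_trans (sqr_ge0 _) (PQ_le set0).
- by case: (leP x y).
- by rewrite real_normK ?num_real.
Qed.

Section Divergences.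

Variable D : finType.

Definition bhattacharyya (p q : D -> R) :=
  \sum_y Num.sqrt (p y) * Num.sqrt (q y).

Definition kl_div (p q : D -> R) := \sum_y p y * ln (p y / q y).

Definition entropy (p : D -> R) := - \sum_y p y * log2 (p y).

Variables p q : D -> R.
Hypotheses (p_ge0 : forall y, 0 <= p y) (q_ge0 : forall y, 0 <= q y).
Hypotheses (p_sum1 : \sum_y p y = 1) (q_sum1 : \sum_y q y = 1).

Lemma sum_sqr_sqrt_subr :
  \sum_y (Num.sqrt (p y) - Num.sqrt (q y)) ^+ 2 = 2 - 2 * bhattacharyya p q.
Proof.
transitivity (\sum_y (p y + q y - 2 * (Num.sqrt (p y) * Num.sqrt (q y)))).
  by apply: eq_bigr => y _; rewrite sqrrB !sqr_sqrtr //; ring.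
by rewrite sumrB big_split /= p_sum1 q_sum1 mulr_sumr.
Qed.

Lemma sum_sqr_sqrt_addr :
  \sum_y (Num.sqrt (p y) + Num.sqrt (q y)) ^+ 2 = 2 + 2 * bhattacharyya p q.
Proof.
transitivity (\sum_y (p y + q y + 2 * (Num.sqrt (p y) * Num.sqrt (q y)))).
  by apply: eq_bigr => y _; rewrite sqrrD !sqr_sqrtr //; ring.
by rewrite !big_split /= p_sum1 q_sum1 mulr_sumr.
Qed.

Lemma sum_norm_subr_sqr_le :
  (\sum_y `|p y - q y|) ^+ 2 <= 4 * (2 - 2 * bhattacharyya p q).
Proof.
have factor y : `|p y - q y| =
    `|Num.sqrt (p y) - Num.sqrt (q y)| * `|Num.sqrt (p y) + Num.sqrt (q y)|.
  by rewrite -normrM -subr_sqr !sqr_sqrtr.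
under eq_bigr do rewrite factor.
apply: le_trans (cauchy_schwarz _ _) _.
have normK (x : R) : `|x| ^+ 2 = x ^+ 2 := real_normK (num_real x).
under eq_bigr do rewrite normK.
under [X in _ * X]eq_bigr do rewrite normK.
rewrite sum_sqr_sqrt_subr sum_sqr_sqrt_addr.
by have := sqr_ge0 (1 - bhattacharyya p q); nra.
Qed.

Lemma sum_in_subr_sqr_le (T : {set D}) :
  (\sum_(y in T) p y - \sum_(y in T) q y) ^+ 2 <= 2 - 2 * bhattacharyya p q.
Proof.
have half_l1 : 2 * `|\sum_(y in T) (p y - q y)| <= \sum_y `|p y - q y|.
  by apply: norm_sum_le_half_sum_norm; rewrite sumrB p_sum1 q_sum1 subrr.
have sqr_half_l1 :
    (2 * `|\sum_(y in T) (p y - q y)|) ^+ 2 <= (\sum_y `|p y - q y|) ^+ 2.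
  by rewrite ler_pXn2r ?nnegrE ?mulr_ge0 ?sumr_ge0.
rewrite -sumrB -real_normK ?num_real //.
by have := sum_norm_subr_sqr_le; rewrite exprMn in sqr_half_l1; lra.
Qed.

Lemma hellinger_le_kl_div :
  (forall y, 0 < p y -> 0 < q y) -> 2 - 2 * bhattacharyya p q <= kl_div p q.
Proof.
move=> supp_pq.
have -> : 2 - 2 * bhattacharyya p q =
    \sum_y (2 * p y - 2 * (Num.sqrt (p y) * Num.sqrt (q y))).
  by rewrite sumrB -!mulr_sumr p_sum1 mulr1.
apply: ler_sum => y _; have [py_gt0 | py_le0] := ltrP 0 (p y); last first.
  have -> : p y = 0 by apply/eqP; rewrite eq_le py_le0 p_ge0.
  by rewrite sqrtr0 !mul0r mulr0 subrr.
have sqrt_py_gt0 : 0 < Num.sqrt (p y) by rewrite sqrtr_gt0.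
have sqrt_qy_gt0 : 0 < Num.sqrt (q y) by rewrite sqrtr_gt0 supp_pq.
have := hellinger_term_le sqrt_py_gt0 sqrt_qy_gt0.
by rewrite !sqr_sqrtr.
Qed.

Lemma stat_dist_sqr_le_kl_div (P Q : {set D} -> R) :
  (forall T, P T = \sum_(y in T) p y) -> (forall T, Q T = \sum_(y in T) q y) ->
  (forall y, 0 < p y -> 0 < q y) -> stat_dist P Q ^+ 2 <= kl_div p q.
Proof.
move=> P_sum Q_sum supp_pq; apply: stat_dist_sqr_le => T; rewrite P_sum Q_sum.
exact: le_trans (sum_in_subr_sqr_le T) (hellinger_le_kl_div supp_pq).
Qed.

End Divergences.

Section Pushforward.

Variables (D Rc : finType) (g : Rc -> D).

(* The body of a definition of type [R] is parsed in [R_scope]; [%R] selects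
   the ring division instead of [Rdiv] (which [out_dist] and [unif_preimage]
   use, hence the [RdivE] rewrites below). *)
Definition pmf_of (y : D) : R := (#|[set r | g r == y]|%:R / #|Rc|%:R)%R.

Lemma pmf_of_ge0 y : 0 <= pmf_of y.
Proof. by rewrite divr_ge0. Qed.

Lemma mean_comp (phi : D -> R) :
  #|Rc|%:R^-1 * \sum_r phi (g r) = \sum_y pmf_of y * phi y.
Proof.
rewrite (partition_big g xpredT) //= mulr_sumr; apply: eq_bigr => y _.
rewrite (eq_bigr (fun=> phi y)) => [|r /eqP <-] //.
by rewrite sumr_const /pmf_of cardsE -[phi y *+ _]mulr_natr; ring.
Qed.

Lemma prob_comp_in (T : {set D}) :
  #|[set r | g r \in T]|%:R / #|Rc|%:R = \sum_(y in T) pmf_of y.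
Proof.
transitivity (#|Rc|%:R^-1 * \sum_r ((g r \in T)%:R : R)).
  rewrite -sum1_card natr_sum mulrC big_mkcond /=; congr (_ * _).
  by apply: eq_bigr => r _; rewrite inE; case: (g r \in T).
rewrite (mean_comp (fun y => (y \in T)%:R)) [RHS]big_mkcond /=.
by apply: eq_bigr => y _; case: (y \in T); rewrite ?mulr1 ?mulr0.
Qed.

Hypothesis Rc_gt0 : (0 < #|Rc|)%N.

Lemma sum_pmf_of : \sum_y pmf_of y = 1.
Proof.
under eq_bigr do rewrite -[pmf_of _]mulr1.
by rewrite -mean_comp sumr_const cardT -cardE mulVf // pnatr_eq0 -lt0n.
Qed.

Lemma pmf_of_gt0 y : 0 < pmf_of y -> exists r, g r = y.
Proof.
move=> pmf_gt0; have /card_gt0P[r] : (0 < #|[set r | g r == y]|)%N.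
  rewrite lt0n; apply: contraTneq pmf_gt0 => card0.
  by rewrite /pmf_of card0 mul0r ltxx.
by rewrite inE => /eqP; exists r.
Qed.

End Pushforward.

Section Uniform.

Variables (D : finType) (S : {set D}).

Definition unif_on (y : D) : R := ((y \in S)%:R / #|S|%:R)%R.

Lemma unif_on_ge0 y : 0 <= unif_on y.
Proof. by rewrite divr_ge0. Qed.

Lemma unif_on_gt0 y : y \in S -> 0 < unif_on y.
Proof.
move=> yS; rewrite /unif_on yS mul1r invr_gt0 ltr0n.
by apply/card_gt0P; exists y.
Qed.

Lemma prob_unif_on_in (T : {set D}) :
  #|T :&: S|%:R / #|S|%:R = \sum_(y in T) unif_on y.
Proof.
rewrite -sum1_card natr_sum mulr_suml big_mkcond [RHS]big_mkcond /=.
apply: eq_bigr => y _; rewrite inE /unif_on.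
by case: (y \in T); case: (y \in S); rewrite /= ?mul0r.
Qed.

Hypothesis S_gt0 : (0 < #|S|)%N.

Lemma sum_unif_on : \sum_y unif_on y = 1.
Proof.
rewrite (eq_bigl (fun y => y \in setT)) => [|y]; last by rewrite inE.
by rewrite -prob_unif_on_in setTI divff // pnatr_eq0 -lt0n.
Qed.

End Uniform.

Lemma log2V (x : R) : 0 < x -> log2 x^-1 = - log2 x.
Proof. by move=> x_gt0; rewrite /log2 lnV // mulNr. Qed.

Lemma condEnt_id (Omega : finType) (C : eqType) (X : Omega -> C) :
  condEnt X (fun w => w) =
  #|Omega|%:R^-1 * \sum_w log2 #|[set v | X v == X w]|%:R.
Proof.
rewrite /condEnt mulr_sumr; apply: eq_bigr => w _.
have -> : #|[pred v | (X v == X w) && (v == w)]| = 1%N.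
  rewrite -(card1 w); apply: eq_card => v.
  by rewrite !inE andb_idl // => /eqP ->.
rewrite RdivE mul1r cardsE log2V ?opprK // ltr0n.
by apply/card_gt0P; exists w; rewrite inE.
Qed.

Lemma card_fiber_fst (D Rc : finType) (z : D) (P : pred (D * Rc)) :
  #|[pred v | (v.1 == z) && P v]| = #|[pred r | P (z, r)]|.
Proof.
rewrite -!sum1_card (eq_bigl (fun v => (v.1 == z) && P (v.1, v.2))) => [|[]//].
rewrite -(pair_big_dep (pred1 z) (fun i j => P (i, j)) (fun _ _ => 1%N)).
by rewrite big_pred1_eq.
Qed.

Lemma condEnt_coins (D Rc : finType) (A : D -> Rc -> D) :
  condEnt (fun w : D * Rc => w.1) (fun w => A w.1 w.2) =
  #|D|%:R^-1 * \sum_z entropy (pmf_of (A z)).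
Proof.
transitivity (\sum_z \sum_r
    #|D|%:R^-1 * (#|Rc|%:R^-1 * - log2 (pmf_of (A z) (A z r)))).
  rewrite /condEnt pair_big /=; apply: eq_bigr => -[z r] _ /=.
  have card_fst : #|[pred v : D * Rc | v.1 == z]| = #|Rc|.
    rewrite (eq_card (B := [pred v | (v.1 == z) && xpredT v])); last first.
      by move=> v; rewrite !inE andbT.
    by rewrite card_fiber_fst; apply: eq_card.
  rewrite card_fiber_fst card_fst card_prod natrM invfM -mulrA.
  by rewrite /pmf_of cardsE RdivE.
rewrite mulr_sumr; apply: eq_bigr => z _; rewrite -mulr_sumr; congr (_ * _).
rewrite -mulr_sumr (mean_comp (A z) (fun y => - log2 (pmf_of (A z) y))).
by rewrite /entropy -sumrN; under eq_bigr do rewrite mulrN.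
Qed.

Lemma kl_div_unif_on (D : finType) (p : D -> R) (S : {set D}) :
  (forall y, 0 <= p y) -> \sum_y p y = 1 -> (forall y, 0 < p y -> y \in S) ->
  kl_div p (unif_on S) = ln 2 * (log2 #|S|%:R - entropy p).
Proof.
move=> p_ge0 p_sum1 supp_p.
rewrite mulrBr mul_ln2_log2 /entropy mulrN opprK mulr_sumr.
transitivity (\sum_y (p y * ln #|S|%:R + p y * ln (p y))).
  apply: eq_bigr => y _; have [py_gt0 | py_le0] := ltrP 0 (p y); last first.
    have -> : p y = 0 by apply/eqP; rewrite eq_le py_le0 p_ge0.
    by rewrite !mul0r addr0.
  have S_gt0 : 0 < #|S|%:R :> R.
    by rewrite ltr0n; apply/card_gt0P; exists y; exact: supp_p.
  rewrite /unif_on supp_p // RdivE div1r invrK -mulrDr -lnM //.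
  by rewrite RmultE [_ * p y]mulrC.
rewrite big_split /= -mulr_suml p_sum1 mul1r; congr (_ + _).
by apply: eq_bigr => y _; rewrite mulrCA mul_ln2_log2.
Qed.

Lemma pmf_of_collision_finder_gt0 (D Rc : finType) (C : eqType) (F : D -> C)
    (A : D -> Rc -> D) (z y : D) :
  collision_finder F A -> 0 < pmf_of (A z) y -> y \in [set z' | F z' == F z].
Proof. by move=> A_coll /pmf_of_gt0[r <-]; rewrite inE A_coll. Qed.

Lemma mean_kl_div_collision_finder (D Rc : finType) (C : eqType) (F : D -> C)
    (A : D -> Rc -> D) :
  (0 < #|Rc|)%N -> collision_finder F A ->
  #|D|%:R^-1 * \sum_z kl_div (pmf_of (A z)) (unif_on [set z' | F z' == F z]) =
  ln 2 * (condEnt F (fun z => z) -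
          condEnt (fun w : D * Rc => w.1) (fun w => A w.1 w.2)).
Proof.
move=> Rc_gt0 A_coll.
rewrite condEnt_id condEnt_coins -mulrBr -sumrB mulrCA; congr (_ * _).
rewrite mulr_sumr.
apply: eq_bigr => z _; apply: kl_div_unif_on => [||y]; first exact: pmf_of_ge0.
  exact: sum_pmf_of.
exact: pmf_of_collision_finder_gt0.
Qed.

Theorem lemma4p3 (n : nat) (n_gt0 : (0 < n)%N) (f : bits n -> bits n)
    (Rc : finType) (Rc_nonempty : (0 < #|Rc|)%N)
    (A : dom n -> Rc -> dom n)
    (hA : collision_finder (Fpre f) A)
    (hH : condEnt (fun w : dom n * Rc => w.1) (fun w : dom n * Rc => A w.1 w.2)
          >= condEnt (Fpre f) (fun z : dom n => z)
             - (64 * (n%:R) ^+ 2)^-1) :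
  (#|{: dom n}|%:R)^-1 *
    \sum_(z : dom n) stat_dist (out_dist A z) (unif_preimage (Fpre f) z)
  <= (8 * n%:R)^-1.
Proof.
set N := #|{: dom n}|; set e : R := (8 * n%:R)^-1.
pose S z := [set z' | Fpre f z' == Fpre f z].
pose kl z := kl_div (pmf_of (A z)) (unif_on (S z)).
have N_gt0 : 0 < N%:R :> R.
  rewrite ltr0n; apply/card_gt0P.
  by exists ([tuple of nseq n false], Ordinal n_gt0).
have e_ge0 : 0 <= e by rewrite invr_ge0 mulr_ge0 ?ler0n.
have e_sqr : e ^+ 2 = (64 * n%:R ^+ 2)^-1.
  by rewrite /e; field; rewrite pnatr_eq0 -lt0n.
have sum_kl_le : \sum_z kl z <= N%:R * e ^+ 2.
  rewrite -ler_pdivrMl // mean_kl_div_collision_finder //.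
  rewrite -e_sqr in hH.
  by have := sqr_ge0 e; have := ln2_gt0; have := ln2_le1; nra.
pose sd z := stat_dist (out_dist A z) (unif_preimage (Fpre f) z).
have sd_sqr_le z : sd z ^+ 2 <= kl z.
  have S_gt0 : (0 < #|S z|)%N by apply/card_gt0P; exists z; rewrite inE.
  apply: stat_dist_sqr_le_kl_div => [y|y|||T|T|y].
  - exact: pmf_of_ge0.
  - exact: unif_on_ge0.
  - exact: sum_pmf_of.
  - exact: sum_unif_on.
  - by rewrite /out_dist RdivE prob_comp_in.
  - by rewrite /unif_preimage RdivE prob_unif_on_in.
  - by move/(pmf_of_collision_finder_gt0 hA); apply: unif_on_gt0.
have sum_sd_sqr_le : \sum_z sd z ^+ 2 <= N%:R * e ^+ 2.
  exact: le_trans (ler_sum _ (fun z _ => sd_sqr_le z)) sum_kl_le.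
rewrite ler_pdivrMl //; apply: sum_le_of_sum_sqr_le sum_sd_sqr_le => // z.
exact: stat_dist_ge0.
Qed.
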